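(* Let $\lambda$ be a singular cardinal of cofinality $\kappa$ and $\vec\lambda=\langle\lambda_i:i<\kappa\rangle$ a strictly increasing sequence of regular cardinals converging to $\lambda$. Then $\mathbb G(\vec\lambda)$ is $\kappa^+$-directed closed.
   Context: For $f,g:\kappa\to\mathrm{ON}$, $f<^*g$ means there is $j<\kappa$ with $f(i)<g(i)$ for all $i\ge j$. Given a $<^*$-increasing sequence $\langle f_\gamma:\gamma<\beta\rangle$ in $\prod_{i<\kappa}\lambda_i$, $\beta$ is a good point if there are an unbounded $A\subseteq\beta$ of order type $\mathrm{cf}(\beta)$ and $j<\kappa$ such that for all $i\ge j$, $\langle f_\gamma(i):\gamma\in A\rangle$ is strictly increasing. $\mathbb G(\vec\lambda)$ consists of sequences $\langle f_\beta:\beta\le\alpha\rangle$ with $\alpha<\lambda^+$ such that for all $\beta\le\alpha$: $f_\beta\in\prod_{i<\kappa}\lambda_i$; $f_\gamma<^*f_\beta$ for all $\gamma<\beta$; and if $\mathrm{cf}(\beta)>\kappa$ then $\beta$ is a good point of $\langle f_\gamma:\gamma<\beta\rangle$. The order is end-extension: $p\le q$ iff $p\upharpoonright\mathrm{dom}(q)=q$. *)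

(* Ordinals are modelled as elements of an arbitrary well-ordered
   type O (any initial segment of ON large enough to contain lambda^+). *)
From Stdlib Require Import Classical.
Set Implicit Arguments.

Record WOrd := {
  carrier :> Type;
  olt : carrier -> carrier -> Prop;
  olt_irrefl : forall x, ~ olt x x;
  olt_trans : forall x y z, olt x y -> olt y z -> olt x z;
  olt_total : forall x y, olt x y \/ x = y \/ olt y x;
  olt_wf : well_founded olt }.
Arguments olt {w} _ _.

Definition ole {O : WOrd} (x y : O) : Prop := olt x y \/ x = y.

Definition seg {O : WOrd} (a : O) : Type := {x : O | olt x a}.

Definition inj_into (A B : Type) : Prop :=
  exists f : A -> B, forall x y, f x = f y -> x = y.

Definition is_cardinal {O : WOrd} (a : O) : Prop :=
  forall b, olt b a -> ~ inj_into (seg a) (seg b).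
Definition is_infinite {O : WOrd} (a : O) : Prop := inj_into nat (seg a).

Definition sub_below {O : WOrd} (A : O -> Prop) (b : O) : Prop :=
  forall x, A x -> olt x b.
Definition unbounded_in {O : WOrd} (A : O -> Prop) (b : O) : Prop :=
  forall x, olt x b -> exists y, A y /\ ole x y.

Definition has_order_type {O : WOrd} (A : O -> Prop) (g : O) : Prop :=
  exists f : {x : O | A x} -> seg g,
    (forall y : seg g, exists x, f x = y) /\
    (forall x y, olt (proj1_sig x) (proj1_sig y) <->
                 olt (proj1_sig (f x)) (proj1_sig (f y))).

Definition cofinal_type {O : WOrd} (b g : O) : Prop :=
  exists A, sub_below A b /\ unbounded_in A b /\ has_order_type A g.

Definition cof_is {O : WOrd} (b g : O) : Prop :=
  cofinal_type b g /\ forall d, olt d g -> ~ cofinal_type b d.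

Definition regular_cardinal {O : WOrd} (a : O) : Prop :=
  is_cardinal a /\ is_infinite a /\ cof_is a a.

Definition singular_cardinal_of_cof {O : WOrd} (lambda kappa : O) : Prop :=
  is_cardinal lambda /\ is_infinite lambda /\ cof_is lambda kappa /\ olt kappa lambda.

Definition succ_cardinal {O : WOrd} (a ap : O) : Prop :=
  is_cardinal ap /\ olt a ap /\ forall c, is_cardinal c -> olt a c -> ole ap c.

Definition ltstar {O : WOrd} {k : O} (f g : seg k -> O) : Prop :=
  exists j : seg k, forall i : seg k,
    ole (proj1_sig j) (proj1_sig i) -> olt (f i) (g i).

(* a (partial) sequence <f_b : b in dom> of functions kappa -> ON *)
Definition Cond {O : WOrd} (k : O) : Type := O -> option (seg k -> O).

Definition good_point {O : WOrd} {k : O} (p : Cond k) (b : O) : Prop :=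
  exists (A : O -> Prop) (j : seg k),
    sub_below A b /\ unbounded_in A b /\
    (exists c, cof_is b c /\ has_order_type A c) /\
    forall i : seg k, ole (proj1_sig j) (proj1_sig i) ->
      forall g g' fg fg', A g -> A g' -> olt g g' ->
        p g = Some fg -> p g' = Some fg' -> olt (fg i) (fg' i).

Definition inG {O : WOrd} {k : O} (lam : seg k -> O) (lp : O) (p : Cond k) : Prop :=
  exists a, olt a lp /\
    (forall b, p b <> None <-> ole b a) /\
    forall b f, p b = Some f ->
      (forall i, olt (f i) (lam i)) /\
      (forall g f', olt g b -> p g = Some f' -> ltstar f' f) /\
      ((exists c, cof_is b c /\ olt k c) -> good_point p b).

(* p <= q (p stronger) iff p end-extends q *)
Definition ext {O : WOrd} {k : O} (p q : Cond k) : Prop :=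
  forall b f, q b = Some f -> p b = Some f.

(* G(lam) is kappa^+-directed closed: every directed D of size < kappa^+
   (i.e. |D| <= kappa) has a lower bound *)
Definition G_kappa_plus_directed_closed {O : WOrd} {k : O} (lam : seg k -> O) (lp : O) : Prop :=
  forall D : Cond k -> Prop,
    (forall p, D p -> inG lam lp p) ->
    (forall p q, D p -> D q -> exists r, D r /\ ext r p /\ ext r q) ->
    inj_into {p : Cond k | D p} (seg k) ->
    exists r, inG lam lp r /\ forall p, D p -> ext r p.

(* Let D be a directed family of at most kappa conditions. Directedness makes its members
   pairwise compatible, so they glue to one sequence; let delta be the least ordinal above
   their lengths. Since lambda^+ is regular (which rests on |lambda x lambda| = |lambda|,
   proved with Goedel's well-order of pairs), delta < lambda^+; since at most kappa lengths
   are cofinal in delta, cf(delta) <= kappa and delta need not be a good point. Beyond the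
   first i with lambda_i > kappa, the regularity of lambda_i bounds the at most kappa values
   at i of the last functions of the members of D. A function f_delta realising these bounds
   lies <^*-above the whole glued sequence, and appending it at delta yields a lower bound. *)

From Stdlib Require Import Classical ClassicalEpsilon FunctionalExtensionality ProofIrrelevance
  List Arith Lia FinFun Wellfounded.

#[local] Arguments olt_irrefl {w} x _.
#[local] Arguments olt_trans {w} x y z _ _.
#[local] Arguments olt_total {w} x y.
#[local] Arguments olt_wf {w}.

Lemma proj1_sig_inj {A : Type} {P : A -> Prop} (u v : {a | P a}) :
  proj1_sig u = proj1_sig v -> u = v.
Proof. apply eq_sig_hprop; intros; apply proof_irrelevance. Qed.

Lemma choice_on {A B : Type} (b0 : B) (P : A -> Prop) (R : A -> B -> Prop) :
  (forall a, P a -> exists b, R a b) -> exists f : A -> B, forall a, P a -> R a (f a).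
Proof.
  intros H. destruct (choice (fun a b => P a -> R a b)) as [f Hf].
  - intros a. destruct (classic (P a)) as [Pa|nPa].
    + destruct (H a Pa) as [b Hb]. now exists b.
    + exists b0. tauto.
  - now exists f.
Qed.

(** * Ordinals, injections and finiteness *)

Section Order.
Context {O : WOrd}.
Implicit Types x y z : O.

Lemma olt_asym x y : olt x y -> ~ olt y x.
Proof. intros H H'. exact (olt_irrefl x (olt_trans _ _ _ H H')). Qed.

Lemma ole_refl x : ole x x.
Proof. now right. Qed.

Lemma olt_ole x y : olt x y -> ole x y.
Proof. now left. Qed.

Lemma ole_trans x y z : ole x y -> ole y z -> ole x z.
Proof. intros [H| ->] [H'| ->]; [left; exact (olt_trans _ _ _ H H')|left|left|right]; auto. Qed.

Lemma olt_ole_trans x y z : olt x y -> ole y z -> olt x z.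
Proof. intros H [H'| ->]; [exact (olt_trans _ _ _ H H')|exact H]. Qed.

Lemma ole_olt_trans x y z : ole x y -> olt y z -> olt x z.
Proof. intros [H| ->] H'; [exact (olt_trans _ _ _ H H')|exact H']. Qed.

Lemma not_olt_ole x y : ~ olt x y -> ole y x.
Proof. intros H. destruct (olt_total x y) as [h|[->|h]]; [contradiction|right|left]; auto. Qed.

Lemma ole_not_olt x y : ole x y -> ~ olt y x.
Proof. intros [H| ->]; [apply olt_asym, H|apply olt_irrefl]. Qed.

Lemma not_ole_olt x y : ~ ole x y -> olt y x.
Proof. intros H. destruct (olt_total x y) as [h|[->|h]]; auto; exfalso; apply H; [left|right]; auto. Qed.

Lemma ole_antisym x y : ole x y -> ole y x -> x = y.
Proof. intros [H| ->] H'; [exfalso; exact (ole_not_olt _ _ H' H)|reflexivity]. Qed.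

Lemma exists_least (P : O -> Prop) :
  (exists x, P x) -> exists x, P x /\ forall y, P y -> ole x y.
Proof.
  intros [x0 H0]. apply NNPP; intro Hn. revert H0.
  induction x0 as [x IH] using (well_founded_ind olt_wf). intros Px.
  apply Hn. exists x. split; [exact Px|]. intros y Py. apply not_olt_ole. intros Hy. exact (IH y Hy Py).
Qed.

Definition least (x0 : O) (P : O -> Prop) : O :=
  epsilon (inhabits x0) (fun x => P x /\ forall y, P y -> ole x y).

Lemma least_spec (x0 : O) (P : O -> Prop) :
  (exists x, P x) -> P (least x0 P) /\ forall y, P y -> ole (least x0 P) y.
Proof. intros H. unfold least. apply epsilon_spec, exists_least, H. Qed.

Definition omax x y : O := if excluded_middle_informative (olt x y) then y else x.

Lemma omax_l x y : ole x (omax x y).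
Proof. unfold omax. destruct (excluded_middle_informative _); [now left|apply ole_refl]. Qed.

Lemma omax_r x y : ole y (omax x y).
Proof. unfold omax. destruct (excluded_middle_informative _); [apply ole_refl|now apply not_olt_ole]. Qed.

Lemma omax_lt x y z : olt x z -> olt y z -> olt (omax x y) z.
Proof. unfold omax. now destruct (excluded_middle_informative _). Qed.

End Order.

Section Injections.
Implicit Types A B C D X Y : Type.

Lemma inj_into_refl A : inj_into A A.
Proof. now exists (fun x => x). Qed.

Lemma inj_into_trans A B C : inj_into A B -> inj_into B C -> inj_into A C.
Proof. intros [f Hf] [g Hg]. exists (fun x => g (f x)). auto. Qed.

Lemma inj_into_prod A B C D : inj_into A B -> inj_into C D -> inj_into (A * C) (B * D).
Proof.
  intros [f Hf] [g Hg]. exists (fun x => (f (fst x), g (snd x))).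
  intros [x1 x2] [y1 y2] E. injection E as E1 E2. f_equal; auto.
Qed.

Lemma inj_into_of_surj A B (f : A -> B) : (forall y, exists x, f x = y) -> inj_into B A.
Proof.
  intros H. destruct (choice (fun y x => f x = y) H) as [g Hg].
  exists g. intros x y E. now rewrite <- (Hg x), <- (Hg y), E.
Qed.

Lemma inj_into_extend {A B} (P : A -> Prop) (b0 : B) :
  inj_into {a | P a} B -> exists j : A -> B, forall a a', P a -> P a' -> j a = j a' -> a = a'.
Proof.
  intros [f Hf].
  exists (fun a => match excluded_middle_informative (P a) with
                   | left H => f (exist _ a H) | right _ => b0 end).
  intros a a' Ha Ha'.
  destruct (excluded_middle_informative (P a)); [|contradiction].
  destruct (excluded_middle_informative (P a')); [|contradiction].
  intros E. exact (f_equal (@proj1_sig _ _) (Hf _ _ E)).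
Qed.

(* Hilbert's hotel: [None] moves into room [e 0] and every guest [e n] moves to [e (S n)]. *)
Lemma inj_into_option A : inj_into nat A -> inj_into (option A) A.
Proof.
  intros [e He].
  set (shift := fun a : A => match excluded_middle_informative (exists n, e n = a) with
    | left H => e (S (proj1_sig (constructive_indefinite_description _ H))) | right _ => a end).
  assert (shift_cases : forall a, (exists n, a = e n /\ shift a = e (S n)) \/
                                  ((forall n, e n <> a) /\ shift a = a)).
  { intros a. unfold shift. destruct (excluded_middle_informative _) as [H|H].
    - left. destruct (constructive_indefinite_description _ H) as [n <-]. now exists n.
    - right. split; [|reflexivity]. intros n En. apply H. now exists n. }
  exists (fun o => match o with None => e 0 | Some a => shift a end).
  intros [a|] [b|]; simpl; intros E; [f_equal| | |reflexivity].
  - destruct (shift_cases a) as [[n [-> Ea]]|[Na Ea]];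
      destruct (shift_cases b) as [[m [-> Eb]]|[Nb Eb]]; rewrite Ea, Eb in E.
    + apply He in E. injection E as ->. reflexivity.
    + now destruct (Nb (S n)).
    + now destruct (Na (S m)).
    + exact E.
  - destruct (shift_cases a) as [[n [-> Ea]]|[Na Ea]]; rewrite Ea in E.
    + apply He in E. discriminate.
    + now destruct (Na 0).
  - destruct (shift_cases b) as [[n [-> Eb]]|[Nb Eb]]; rewrite Eb in E.
    + apply He in E. discriminate.
    + now destruct (Nb 0).
Qed.

Lemma Finite_not_infinite X : Finite X -> ~ inj_into nat X.
Proof.
  intros [l Hl] [e He].
  assert (ND : NoDup (map e (seq 0 (S (length l))))).
  { apply Injective_map_NoDup; [intros a b; apply He|apply seq_NoDup]. }
  pose proof (NoDup_incl_length ND (fun x _ => Hl x)) as L.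
  rewrite length_map, length_seq in L. lia.
Qed.

Lemma Finite_prod X Y : Finite X -> Finite Y -> Finite (X * Y).
Proof. intros [l Hl] [m Hm]. exists (list_prod l m). intros [x y]. now apply in_prod. Qed.

Lemma Finite_option X : Finite X -> Finite (option X).
Proof. intros [l Hl]. exists (None :: map Some l). intros [x|]; [right; apply in_map, Hl|now left]. Qed.

Lemma Finite_surj X Y (f : X -> Y) : (forall y, exists x, f x = y) -> Finite X -> Finite Y.
Proof. intros Hf [l Hl]. exists (map f l). intros y. destruct (Hf y) as [x <-]. apply in_map, Hl. Qed.

End Injections.

Section Segments.
Context {O : WOrd}.

Lemma inj_into_seg (a b : O) : ole a b -> inj_into (seg a) (seg b).
Proof.
  intros H. exists (fun x : seg a => exist (fun y => olt y b) (proj1_sig x) (olt_ole_trans _ _ _ (proj2_sig x) H)).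
  intros x y E. apply proj1_sig_inj. exact (f_equal (@proj1_sig _ _) E).
Qed.

Lemma closed_seg_inj_seg (a b : O) : olt a b -> inj_into {x | ole x a} (seg b).
Proof.
  intros H. exists (fun x : {x | ole x a} => exist (fun y => olt y b) (proj1_sig x) (ole_olt_trans _ _ _ (proj2_sig x) H)).
  intros x y E. apply proj1_sig_inj. exact (f_equal (@proj1_sig _ _) E).
Qed.

Lemma closed_seg_inj_option (m : O) : inj_into {x | ole x m} (option (seg m)).
Proof.
  exists (fun x => match excluded_middle_informative (olt (proj1_sig x) m) with
                   | left H => Some (exist _ (proj1_sig x) H) | right _ => None end).
  intros [x Hx] [y Hy]; simpl.
  destruct (excluded_middle_informative (olt x m)) as [Lx|Lx];
    destruct (excluded_middle_informative (olt y m)) as [Ly|Ly]; intros E; try discriminate.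
  - injection E as E. now apply proj1_sig_inj.
  - apply proj1_sig_inj; simpl.
    destruct Hx as [Hx| ->]; [contradiction|]. destruct Hy as [Hy| ->]; [contradiction|reflexivity].
Qed.

Lemma closed_seg_inj (m : O) : inj_into nat (seg m) -> inj_into {x | ole x m} (seg m).
Proof. intros H. exact (inj_into_trans _ _ _ (closed_seg_inj_option m) (inj_into_option _ H)). Qed.

Lemma closed_seg_finite (m : O) : Finite (seg m) -> Finite {x | ole x m}.
Proof.
  intros H. apply (Finite_surj (option (seg m)) _
    (fun o => match o with
              | Some x => exist (fun y => ole y m) (proj1_sig x) (olt_ole _ _ (proj2_sig x))
              | None => exist (fun y => ole y m) m (ole_refl m) end)); [|now apply Finite_option].
  intros [x [Hx| ->]]; [exists (Some (exist _ x Hx))|exists None]; now apply proj1_sig_inj.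
Qed.

Lemma infinite_of_no_max (x0 m : O) :
  olt x0 m -> (forall x, olt x m -> exists y, olt x y /\ olt y m) -> inj_into nat (seg m).
Proof.
  intros H0 Hnomax.
  destruct (choice (fun x y : seg m => olt (proj1_sig x) (proj1_sig y))) as [next Hnext].
  { intros [x Hx]. destruct (Hnomax x Hx) as [y [Hxy Hy]]. now exists (exist _ y Hy). }
  set (e := fun n => Nat.iter n next (exist _ x0 H0)).
  assert (Hinc : forall n d, olt (proj1_sig (e n)) (proj1_sig (e (S d + n)))).
  { intros n d. induction d as [|d IH]; [apply Hnext|]. exact (olt_trans _ _ _ IH (Hnext _)). }
  exists e. intros a b E.
  destruct (Nat.lt_total a b) as [L|[L|L]]; [exfalso| exact L |exfalso].
  - pose proof (Hinc a (b - S a)) as I. replace (S (b - S a) + a) with b in I by lia.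
    rewrite E in I. exact (olt_irrefl _ I).
  - pose proof (Hinc b (a - S b)) as I. replace (S (a - S b) + b) with a in I by lia.
    rewrite E in I. exact (olt_irrefl _ I).
Qed.

Lemma seg_finite_or_infinite (m : O) : Finite (seg m) \/ inj_into nat (seg m).
Proof.
  induction m as [m IH] using (well_founded_ind olt_wf).
  destruct (classic (exists x, olt x m)) as [[x0 H0]|Hempty].
  2: { left. exists nil. intros [x Hx]. exfalso. eauto. }
  destruct (classic (exists p, olt p m /\ forall x, olt x m -> ole x p)) as [[p [Hp Hmax]]|Hnomax].
  - destruct (IH p Hp) as [Fp|Ip]; [left|right].
    + apply (Finite_surj {x | ole x p} _
        (fun x => exist (fun y => olt y m) (proj1_sig x) (ole_olt_trans _ _ _ (proj2_sig x) Hp)));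
        [|now apply closed_seg_finite].
      intros [x Hx]. exists (exist _ x (Hmax x Hx)). now apply proj1_sig_inj.
    + exact (inj_into_trans _ _ _ Ip (inj_into_seg _ _ (olt_ole _ _ Hp))).
  - right. apply (infinite_of_no_max x0 m H0). intros x Hx. apply NNPP; intros C.
    apply Hnomax. exists x. split; [exact Hx|]. intros y Hy.
    apply not_olt_ole. intros Hxy. apply C. eauto.
Qed.

Lemma infinite_cardinal_no_max (c x : O) :
  is_cardinal c -> inj_into nat (seg c) -> olt x c -> exists y, olt x y /\ olt y c.
Proof.
  intros Hc Hinf Hx. apply NNPP; intros C.
  assert (Hsub : inj_into (seg c) {y | ole y x}).
  { exists (fun y => exist (fun y => ole y x) (proj1_sig y)
                       (not_olt_ole _ _ (fun H => C (ex_intro _ _ (conj H (proj2_sig y)))))).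
    intros y y' E. apply proj1_sig_inj. exact (f_equal (@proj1_sig _ _) E). }
  destruct (seg_finite_or_infinite x) as [Fx|Ix].
  - exact (Finite_not_infinite _ (closed_seg_finite x Fx) (inj_into_trans _ _ _ Hinf Hsub)).
  - exact (Hc x Hx (inj_into_trans _ _ _ Hsub (closed_seg_inj x Ix))).
Qed.

Lemma ole_of_seg_embedding (z w : O) (psi : seg z -> O) :
  (forall a b : seg z, olt (proj1_sig a) (proj1_sig b) -> olt (psi a) (psi b)) ->
  (forall a, olt (psi a) w) -> ole z w.
Proof.
  intros Hmono Hbd.
  assert (Hgrow : forall x (Hx : olt x z), ole x (psi (exist _ x Hx))).
  { intros x. induction x as [x IH] using (well_founded_ind olt_wf). intros Hx.
    apply not_olt_ole. intros L.
    assert (Hy : olt (psi (exist _ x Hx)) z) by exact (olt_trans _ _ _ L Hx).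
    exact (ole_not_olt _ _ (IH _ L Hy) (Hmono (exist (fun y => olt y z) _ Hy) (exist _ x Hx) L)). }
  apply not_olt_ole. intros L. exact (ole_not_olt _ _ (Hgrow w L) (Hbd (exist _ w L))).
Qed.

End Segments.

(** * Order types of well-orders *)

Definition restrict {X : Type} (R : X -> X -> Prop) (P : X -> Prop) (a b : {x | P x}) : Prop :=
  R (proj1_sig a) (proj1_sig b).

Definition iso_seg {O : WOrd} {X : Type} (R : X -> X -> Prop) (z : O) : Prop :=
  exists f : X -> seg z, (forall y, exists x, f x = y) /\
    forall x x', R x x' <-> olt (proj1_sig (f x)) (proj1_sig (f x')).

Section Collapse.
Context {O : WOrd} {W : Type} (R : W -> W -> Prop).
Hypotheses (R_trans : forall u v w, R u v -> R v w -> R u w)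
           (R_total : forall v w, R v w \/ v = w \/ R w v)
           (R_wf : well_founded R).

Lemma iso_seg_inj (z : O) : iso_seg R z -> inj_into W (seg z).
Proof.
  intros [f [_ Hord]]. exists f. intros x y E.
  destruct (R_total x y) as [H|[H|H]]; [exfalso| exact H |exfalso];
    apply Hord in H; rewrite E in H; exact (olt_irrefl _ H).
Qed.

Lemma iso_seg_rank (P : W -> Prop) (F : W -> O) (z : O)
  (P_down : forall v w, R v w -> P w -> P v)
  (F_mono : forall v w, P w -> R v w -> olt (F v) (F w))
  (F_onto : forall w, P w -> forall y, olt y (F w) -> exists v, R v w /\ F v = y)
  (z_ub : forall w, P w -> olt (F w) z)
  (z_least : forall y, (forall w, P w -> olt (F w) y) -> ole z y) :
  (forall y, olt y z -> exists w, P w /\ F w = y) /\ iso_seg (restrict R P) z.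
Proof.
  assert (onto : forall y, olt y z -> exists w, P w /\ F w = y).
  { intros y Hy. apply NNPP; intros C.
    assert (Hbound : forall w, P w -> olt (F w) y).
    { intros w Pw. apply not_ole_olt. intros [Hlt|Heq].
      - destruct (F_onto w Pw y Hlt) as [v [Hv <-]]. apply C. eauto.
      - apply C. eauto. }
    exact (ole_not_olt _ _ (z_least y Hbound) Hy). }
  split; [exact onto|].
  exists (fun w => exist (fun y => olt y z) (F (proj1_sig w)) (z_ub _ (proj2_sig w))). split.
  - intros [y Hy]. destruct (onto y Hy) as [w [Pw <-]]. exists (exist _ w Pw). now apply proj1_sig_inj.
  - intros [a Pa] [b Pb]; unfold restrict; simpl. split; [now apply F_mono|].
    intros L. destruct (R_total a b) as [H|[<-|H]]; [exact H|exfalso..].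
    + exact (olt_irrefl _ L).
    + exact (olt_asym _ _ L (F_mono b a Pa H)).
Qed.

Variable top : O.
Hypothesis seg_below_top : forall w z, iso_seg (restrict R (fun v => R v w)) z -> olt z top.

Definition rank : W -> O :=
  Fix R_wf (fun _ => O) (fun w rk => least top (fun z => forall v (H : R v w), olt (rk v H) z)).

Lemma rank_eq w : rank w = least top (fun z => forall v, R v w -> olt (rank v) z).
Proof.
  unfold rank at 1. rewrite Fix_eq; [reflexivity|].
  intros x f g Hfg. replace g with f; [reflexivity|].
  apply functional_extensionality_dep; intros y. apply functional_extensionality_dep; intros p. apply Hfg.
Qed.

Lemma rank_spec w :
  olt (rank w) top /\ (forall v, R v w -> olt (rank v) (rank w)) /\
  (forall y, olt y (rank w) -> exists v, R v w /\ rank v = y).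
Proof.
  induction w as [w IH] using (well_founded_ind R_wf).
  destruct (least_spec top (fun z => forall v, R v w -> olt (rank v) z)) as [ub least_le].
  { exists top. intros v Hv. apply (IH v Hv). }
  rewrite <- rank_eq in ub, least_le.
  destruct (iso_seg_rank (fun v => R v w) rank (rank w)) as [onto iso].
  - intros u v Huv Hvw. exact (R_trans _ _ _ Huv Hvw).
  - intros u v Hvw Huv. exact (proj1 (proj2 (IH v Hvw)) u Huv).
  - intros v Hvw. exact (proj2 (proj2 (IH v Hvw))).
  - exact ub.
  - exact least_le.
  - split; [exact (seg_below_top w _ iso)|split; [exact ub|exact onto]].
Qed.

Theorem well_order_collapse : exists g, ole g top /\ iso_seg R g.
Proof.
  destruct (exists_least (fun z => forall w, olt (rank w) z)) as [g [ub least_le]].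
  { exists top. intros w. apply rank_spec. }
  destruct (iso_seg_rank (fun _ => True) rank g) as [_ [f [Hsurj Hord]]].
  - trivial.
  - intros v w _. apply rank_spec.
  - intros w _. apply rank_spec.
  - intros w _. apply ub.
  - intros y Hy. apply least_le. intros w. exact (Hy w I).
  - exists g. split; [apply least_le; intros w; apply rank_spec|].
    exists (fun w => f (exist _ w I)). split.
    + intros y. destruct (Hsurj y) as [[w []] Hw]. eauto.
    + intros x x'. exact (Hord (exist _ x I) (exist _ x' I)).
Qed.

End Collapse.

Lemma order_type_le_of_embedding {O : WOrd} (A : O -> Prop) (top : O) (phi : {x | A x} -> O) :
  (forall v w, olt (proj1_sig v) (proj1_sig w) -> olt (phi v) (phi w)) ->
  (forall w, olt (phi w) top) ->
  exists g, ole g top /\ has_order_type A g.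
Proof.
  intros Hmono Hbd. apply (well_order_collapse (restrict olt A)).
  - intros u v w. exact (olt_trans _ _ _).
  - intros v w. destruct (olt_total (proj1_sig v) (proj1_sig w)) as [H|[H|H]]; auto.
    right; left. now apply proj1_sig_inj.
  - exact (wf_inverse_image _ _ olt (@proj1_sig _ _) olt_wf).
  - intros w z [f [Hsurj Hord]]. destruct (choice _ Hsurj) as [G HG].
    apply (ole_olt_trans _ (phi w)); [|apply Hbd].
    apply (ole_of_seg_embedding z (phi w) (fun a => phi (proj1_sig (G a)))).
    + intros a b Hab. apply Hmono, Hord. now rewrite !HG.
    + intros a. apply Hmono, (proj2_sig (G a)).
Qed.

(** * Hessenberg's theorem *)

Section Lexicographic.
Context {O : WOrd} {W : Type} (k1 k2 k3 : W -> O).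

Definition lex3 (u v : W) : Prop :=
  olt (k1 u) (k1 v) \/
  (k1 u = k1 v /\ (olt (k2 u) (k2 v) \/ (k2 u = k2 v /\ olt (k3 u) (k3 v)))).

Lemma lex3_trans u v w : lex3 u v -> lex3 v w -> lex3 u w.
Proof.
  unfold lex3. intros [h|[e [h|[e' h]]]] [g|[f [g|[f' g]]]];
    repeat match goal with H : _ = _ |- _ => rewrite H in * end;
    try (left; eapply olt_trans; eauto; fail); try (left; auto; fail);
    right; split; auto; try (left; eapply olt_trans; eauto; fail); try (left; auto; fail);
    right; split; auto; eapply olt_trans; eauto.
Qed.

Lemma lex3_total (keys_inj : forall u v, k2 u = k2 v -> k3 u = k3 v -> u = v) u v :
  lex3 u v \/ u = v \/ lex3 v u.
Proof.
  unfold lex3.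
  destruct (olt_total (k1 u) (k1 v)) as [h|[h|h]]; [tauto| |tauto].
  destruct (olt_total (k2 u) (k2 v)) as [g|[g|g]]; [tauto| |right; right; right; auto].
  destruct (olt_total (k3 u) (k3 v)) as [f|[f|f]]; [tauto|right; left; auto|right; right; right; auto].
Qed.

Lemma lex3_wf : well_founded lex3.
Proof.
  assert (H : forall m x y w, k1 w = m -> k2 w = x -> k3 w = y -> Acc lex3 w).
  { intros m. induction m as [m IHm] using (well_founded_ind olt_wf).
    intros x. induction x as [x IHx] using (well_founded_ind olt_wf).
    intros y. induction y as [y IHy] using (well_founded_ind olt_wf).
    intros w <- <- <-. constructor. intros v [h|[e [h|[e' h]]]].
    - eapply IHm; eauto.
    - eapply IHx; eauto.
    - eapply IHy; eauto. }
  intros w. eapply H; eauto.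
Qed.

End Lexicographic.

Section Hessenberg.
Context {O : WOrd} (a : O).

Definition godel_max (u : seg a * seg a) : O := omax (proj1_sig (fst u)) (proj1_sig (snd u)).

Definition godel_lt : seg a * seg a -> seg a * seg a -> Prop :=
  lex3 godel_max (fun u => proj1_sig (fst u)) (fun u => proj1_sig (snd u)).

Lemma godel_keys_inj (u v : seg a * seg a) :
  proj1_sig (fst u) = proj1_sig (fst v) -> proj1_sig (snd u) = proj1_sig (snd v) -> u = v.
Proof. destruct u, v; simpl. intros E1 E2. f_equal; now apply proj1_sig_inj. Qed.

Lemma godel_segment_inj (w : seg a * seg a) :
  inj_into {v | godel_lt v w} ({x | ole x (godel_max w)} * {x | ole x (godel_max w)}).
Proof.
  assert (Hmax : forall v, godel_lt v w -> ole (godel_max v) (godel_max w)).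
  { intros v [H|[H _]]; [now left|now right]. }
  exists (fun v => (exist (fun x => ole x (godel_max w)) (proj1_sig (fst (proj1_sig v)))
                     (ole_trans _ _ _ (omax_l _ _) (Hmax _ (proj2_sig v))),
                   exist (fun x => ole x (godel_max w)) (proj1_sig (snd (proj1_sig v)))
                     (ole_trans _ _ _ (omax_r _ _) (Hmax _ (proj2_sig v))))).
  intros u v E. injection E as E1 E2. apply proj1_sig_inj, godel_keys_inj; assumption.
Qed.

Hypothesis a_infinite : inj_into nat (seg a).
Hypothesis square_below : forall m, olt m a -> inj_into nat (seg m) -> inj_into (seg m * seg m) (seg m).

(* A segment below [w] of type at least [a] puts [a] into the square of the closed segment
   up to [godel_max w < a]: impossible if that segment is finite, forcing [a * a <= a] if not. *)
Lemma godel_segment_small w z :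
  iso_seg (restrict godel_lt (fun v => godel_lt v w)) z -> olt z a \/ inj_into (seg a * seg a) (seg a).
Proof.
  intros [f [Hsurj _]].
  destruct (classic (olt z a)) as [Hz|Hz]; [now left|right]. apply not_olt_ole in Hz.
  set (m := godel_max w).
  assert (Hm : olt m a) by (apply omax_lt; apply proj2_sig).
  assert (Ha : inj_into (seg a) ({x | ole x m} * {x | ole x m})).
  { apply (inj_into_trans _ _ _ (inj_into_seg _ _ Hz)).
    exact (inj_into_trans _ _ _ (inj_into_of_surj _ _ f Hsurj) (godel_segment_inj w)). }
  destruct (seg_finite_or_infinite m) as [Fm|Im].
  - apply closed_seg_finite in Fm. exfalso.
    exact (Finite_not_infinite _ (Finite_prod _ _ Fm Fm) (inj_into_trans _ _ _ a_infinite Ha)).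
  - pose proof (inj_into_trans _ _ _ (inj_into_prod _ _ _ _ (closed_seg_inj m Im) (closed_seg_inj m Im))
                               (square_below m Hm Im)) as Hsq.
    pose proof (inj_into_trans _ _ _ Ha Hsq) as Ham.
    apply (inj_into_trans _ _ _ (inj_into_prod _ _ _ _ Ham Ham)).
    exact (inj_into_trans _ _ _ (square_below m Hm Im) (inj_into_seg _ _ (olt_ole _ _ Hm))).
Qed.

Lemma seg_square_inj_of_below : inj_into (seg a * seg a) (seg a).
Proof.
  destruct (classic (inj_into (seg a * seg a) (seg a))) as [H|H]; [exact H|].
  destruct (well_order_collapse godel_lt (lex3_trans _ _ _) (lex3_total _ _ _ godel_keys_inj)
              (lex3_wf _ _ _) a) as [g [Hg Hiso]].
  - intros w z Hz. destruct (godel_segment_small w z Hz) as [Hlt|Hsq]; [exact Hlt|contradiction].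
  - exact (inj_into_trans _ _ _ (iso_seg_inj _ (lex3_total _ _ _ godel_keys_inj) g Hiso) (inj_into_seg _ _ Hg)).
Qed.

End Hessenberg.

Theorem seg_square_inj {O : WOrd} (a : O) : inj_into nat (seg a) -> inj_into (seg a * seg a) (seg a).
Proof.
  intros Ha. apply NNPP; intros C.
  destruct (exists_least (fun a : O => inj_into nat (seg a) /\ ~ inj_into (seg a * seg a) (seg a)))
    as [b [[Hb Cb] Hmin]]; [eauto|].
  apply Cb, (seg_square_inj_of_below b Hb). intros m Hm Im. apply NNPP; intros Cm.
  exact (ole_not_olt _ _ (Hmin m (conj Im Cm)) Hm).
Qed.

(** * Successor and regular cardinals *)

Section SuccessorCardinal.
Context {O : WOrd} (lambda lp : O).
Hypothesis lp_succ : succ_cardinal lambda lp.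
Hypothesis lambda_infinite : inj_into nat (seg lambda).

Lemma seg_inj_lt_succ (a : O) : olt a lp -> inj_into (seg a) (seg lambda).
Proof.
  destruct lp_succ as [_ [_ lp_least]]. intros Ha.
  destruct (exists_least (fun c : O => inj_into (seg a) (seg c))) as [c [Hc Hmin]].
  { exists a. apply inj_into_refl. }
  assert (c_card : is_cardinal c).
  { intros b Hb Ib. exact (ole_not_olt _ _ (Hmin b (inj_into_trans _ _ _ Hc Ib)) Hb). }
  destruct (classic (ole c lambda)) as [L|L].
  - exact (inj_into_trans _ _ _ Hc (inj_into_seg _ _ L)).
  - exfalso. apply not_ole_olt in L.
    exact (ole_not_olt _ _ (ole_trans _ _ _ (lp_least c c_card L) (Hmin a (inj_into_refl _))) Ha).
Qed.

Lemma closed_seg_inj_lt_succ (a : O) : olt a lp -> inj_into {x | ole x a} (seg lambda).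
Proof.
  intros Ha. destruct (classic (olt a lambda)) as [L|L]; [exact (closed_seg_inj_seg _ _ L)|].
  apply not_olt_ole in L.
  apply (inj_into_trans _ _ _ (closed_seg_inj a (inj_into_trans _ _ _ lambda_infinite (inj_into_seg _ _ L)))).
  exact (seg_inj_lt_succ a Ha).
Qed.

(* If [kappa]-many ordinals were cofinal in [lp], then [lp] would inject into [kappa * lambda]. *)
Lemma succ_cardinal_bounded (kappa : O) (X : Type) (h : X -> O) :
  olt kappa lambda -> inj_into X (seg kappa) -> (forall x, olt (h x) lp) ->
  exists u, olt u lp /\ forall x, olt (h x) u.
Proof.
  intros Hkl [hx Hhx] Hh. apply NNPP; intros C.
  assert (Hcof : forall u : seg lp, exists x, ole (proj1_sig u) (h x)).
  { intros [u Hu]. apply NNPP; intros C'. apply C. exists u. split; [exact Hu|].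
    intros x. apply not_ole_olt. intros H. apply C'. eauto. }
  destruct (choice _ Hcof) as [pick Hpick].
  assert (HJ : forall x, exists j : O -> seg lambda,
             forall y y', ole y (h x) -> ole y' (h x) -> j y = j y' -> y = y').
  { intros x. destruct lambda_infinite as [e _].
    exact (inj_into_extend (fun y => ole y (h x)) (e 0) (closed_seg_inj_lt_succ _ (Hh x))). }
  destruct (choice _ HJ) as [J HJ'].
  destruct lp_succ as [lp_card [lambda_lt _]].
  apply (lp_card lambda lambda_lt).
  apply (inj_into_trans (seg lp) (seg kappa * seg lambda)).
  - exists (fun u => (hx (pick u), J (pick u) (proj1_sig u))).
    intros u u' E. injection E as E1 E2. apply Hhx in E1. rewrite E1 in E2.
    apply proj1_sig_inj. apply (HJ' (pick u')); [rewrite <- E1; apply Hpick|apply Hpick|exact E2].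
  - apply (inj_into_trans _ _ _ (inj_into_prod _ _ _ _ (inj_into_seg _ _ (olt_ole _ _ Hkl)) (inj_into_refl _))).
    exact (seg_square_inj lambda lambda_infinite).
Qed.

End SuccessorCardinal.

Section Cofinality.
Context {O : WOrd}.

Lemma cof_is_le (b c g : O) : cof_is b c -> cofinal_type b g -> ole c g.
Proof. intros [_ Hmin] Hg. apply not_olt_ole. intros L. exact (Hmin g L Hg). Qed.

Lemma regular_bounded (mu kappa : O) (X : Type) (v : X -> O) :
  regular_cardinal mu -> olt kappa mu -> inj_into X (seg kappa) -> (forall x, olt (v x) mu) ->
  exists z, olt z mu /\ forall x, olt (v x) z.
Proof.
  intros [mu_card [_ mu_cof]] Hk HX Hv. apply NNPP; intros C.
  set (S := fun y => exists x, v x = y).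
  destruct (order_type_le_of_embedding S mu (@proj1_sig _ _)) as [g [Hg Hot]].
  { intros a b H. exact H. }
  { intros [y [x <-]]. apply Hv. }
  assert (Hcof : cofinal_type mu g).
  { exists S. split; [intros y [x <-]; apply Hv|split; [|exact Hot]].
    intros z Hz. apply NNPP; intros C'. apply C. exists z. split; [exact Hz|].
    intros x. apply not_ole_olt. intros H. apply C'. exists (v x). split; [now exists x|exact H]. }
  pose proof (ole_antisym _ _ Hg (cof_is_le _ _ _ mu_cof Hcof)) as ->.
  destruct Hot as [f [Hsurj _]].
  apply (mu_card kappa Hk).
  apply (inj_into_trans _ _ _ (inj_into_of_surj _ _ f Hsurj)).
  refine (inj_into_trans _ _ _ (inj_into_of_surj X {y | S y} (fun x => exist S (v x) (ex_intro _ x eq_refl)) _) HX).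
  intros [y [x <-]]. exists x. now apply proj1_sig_inj.
Qed.

(* The values that exceed every value of smaller index are cofinal, and indexing them is
   an order embedding into [kappa]. *)
Lemma cofinal_type_of_family (kappa delta : O) (X : Type) (a : X -> O) :
  inj_into X (seg kappa) -> (forall x, olt (a x) delta) ->
  (forall b, olt b delta -> exists x, ole b (a x)) ->
  exists g, ole g kappa /\ cofinal_type delta g.
Proof.
  intros [h Hh] Ha Hcof.
  set (record := fun x => forall x', olt (proj1_sig (h x')) (proj1_sig (h x)) -> olt (a x') (a x)).
  set (B := fun y => exists x, a x = y /\ record x).
  set (idx := fun w : {y | B y} =>
                proj1_sig (h (proj1_sig (constructive_indefinite_description _ (proj2_sig w))))).
  destruct (order_type_le_of_embedding B kappa idx) as [g [Hg Hot]].
  - intros v w Hvw. unfold idx.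
    destruct (constructive_indefinite_description _ (proj2_sig v)) as [xv [Ev Rv]].
    destruct (constructive_indefinite_description _ (proj2_sig w)) as [xw [Ew Rw]]. simpl.
    destruct (olt_total (proj1_sig (h xv)) (proj1_sig (h xw))) as [L|[L|L]]; [exact L|exfalso..].
    + apply proj1_sig_inj, Hh in L. subst xw. rewrite <- Ev, <- Ew in Hvw. exact (olt_irrefl _ Hvw).
    + apply (olt_asym _ _ Hvw). rewrite <- Ev, <- Ew. exact (Rv xw L).
  - intros w. apply proj2_sig.
  - exists g. split; [exact Hg|]. exists B. split; [intros y [x [<- _]]; apply Ha|split; [|exact Hot]].
    intros b Hb.
    destruct (exists_least (fun xi => exists x, ole b (a x) /\ proj1_sig (h x) = xi))
      as [xi [[x [Hbx <-]] Hmin]].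
    { destruct (Hcof b Hb) as [x Hx]. eauto. }
    exists (a x). split; [|exact Hbx]. exists x. split; [reflexivity|].
    intros x' Hx'. apply (olt_ole_trans _ b); [|exact Hbx]. apply not_ole_olt. intros H.
    exact (ole_not_olt _ _ (Hmin _ (ex_intro _ x' (conj H eq_refl))) Hx').
Qed.

End Cofinality.

Lemma tail_above {O : WOrd} (lambda kappa : O) (lam : seg kappa -> O) :
  olt kappa lambda ->
  (forall i j : seg kappa, olt (proj1_sig i) (proj1_sig j) -> olt (lam i) (lam j)) ->
  (forall i, regular_cardinal (lam i)) ->
  unbounded_in (fun x => exists i, lam i = x) lambda ->
  exists j0 : seg kappa, forall i : seg kappa, ole (proj1_sig j0) (proj1_sig i) -> olt kappa (lam i).
Proof.
  intros Hkl Hmono Hreg Hunb.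
  assert (exists j0, olt kappa (lam j0)) as [j0 Hj0].
  { destruct (Hunb kappa Hkl) as [y [[i0 <-] [Hlt|Heq]]]; [eauto|].
    destruct (Hreg i0) as [Hcard [Hinf _]]. rewrite <- Heq in Hcard, Hinf.
    destruct (infinite_cardinal_no_max kappa (proj1_sig i0) Hcard Hinf (proj2_sig i0)) as [j [Hij Hj]].
    exists (exist _ j Hj). apply (ole_olt_trans _ (lam i0)); [now right|apply Hmono, Hij]. }
  exists j0. intros i [Hlt|Heq].
  - exact (olt_trans _ _ _ Hj0 (Hmono _ _ Hlt)).
  - replace i with j0 by now apply proj1_sig_inj. exact Hj0.
Qed.

Lemma sup_below_successor {O : WOrd} (lambda lp kappa : O) (X : Type) (a : X -> O) :
  succ_cardinal lambda lp -> inj_into nat (seg lambda) -> olt kappa lambda ->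
  inj_into X (seg kappa) -> (forall x, olt (a x) lp) ->
  exists delta, olt delta lp /\ (forall x, olt (a x) delta) /\
    (forall b, olt b delta -> exists x, ole b (a x)) /\ ~ (exists c, cof_is delta c /\ olt kappa c).
Proof.
  intros Hsucc Hinf Hkl HX Ha.
  destruct (succ_cardinal_bounded lambda lp Hsucc Hinf kappa X a Hkl HX Ha) as [u [Hu Hau]].
  destruct (exists_least (fun z => forall x, olt (a x) z)) as [delta [Hub Hmin]]; [eauto|].
  assert (Hsup : forall b, olt b delta -> exists x, ole b (a x)).
  { intros b Hb. apply NNPP; intros C. refine (ole_not_olt _ _ (Hmin b _) Hb).
    intros x. apply not_ole_olt. intros H. apply C. eauto. }
  exists delta. split; [exact (ole_olt_trans _ _ _ (Hmin u Hau) Hu)|].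
  split; [exact Hub|]. split; [exact Hsup|]. intros [c [Hc Hkc]].
  destruct (cofinal_type_of_family kappa delta X a HX Hub Hsup) as [g [Hg Hcof]].
  exact (ole_not_olt _ _ (cof_is_le _ _ _ Hc Hcof) (ole_olt_trans _ _ _ Hg Hkc)).
Qed.

Lemma bounding_function {O : WOrd} (kappa : O) (lam : seg kappa -> O) (j0 : seg kappa)
  (X : Type) (t : X -> seg kappa -> O) :
  (forall i, regular_cardinal (lam i)) ->
  (forall i, ole (proj1_sig j0) (proj1_sig i) -> olt kappa (lam i)) ->
  inj_into X (seg kappa) -> (forall x i, olt (t x i) (lam i)) ->
  exists fd : seg kappa -> O, (forall i, olt (fd i) (lam i)) /\
    forall i, ole (proj1_sig j0) (proj1_sig i) -> forall x, olt (t x i) (fd i).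
Proof.
  intros Hreg Htail HX Ht.
  assert (H : forall i, exists z, olt z (lam i) /\
                (ole (proj1_sig j0) (proj1_sig i) -> forall x, olt (t x i) z)).
  { intros i. destruct (classic (ole (proj1_sig j0) (proj1_sig i))) as [Hi|Hi].
    - destruct (regular_bounded (lam i) kappa X (fun x => t x i) (Hreg i) (Htail i Hi) HX
                  (fun x => Ht x i)) as [z [Hz Hzb]]. eauto.
    - destruct (Hreg i) as [_ [[e _] _]]. exists (proj1_sig (e 0)). split; [apply proj2_sig|tauto]. }
  destruct (choice _ H) as [fd Hfd]. exists fd. split; intros; now apply Hfd.
Qed.

(** * Amalgamating a directed family of conditions *)

Section Conditions.
Context {O : WOrd} {k : O}.

Definition inG_last (lam : seg k -> O) (lp : O) (p : Cond k) (a : O) : Prop :=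
  olt a lp /\
    (forall b, p b <> None <-> ole b a) /\
    forall b f, p b = Some f ->
      (forall i, olt (f i) (lam i)) /\
      (forall g f', olt g b -> p g = Some f' -> ltstar f' f) /\
      ((exists c, cof_is b c /\ olt k c) -> good_point p b).

Lemma inG_last_top lam lp p a : inG_last lam lp p a -> exists f, p a = Some f.
Proof.
  intros [_ [Hdom _]]. destruct (p a) as [f|] eqn:E; [eauto|].
  exfalso. exact (proj2 (Hdom a) (ole_refl a) E).
Qed.

Lemma ltstar_tail_trans (f g h : seg k -> O) (j0 : seg k) :
  ltstar f g -> (forall i, ole (proj1_sig j0) (proj1_sig i) -> olt (g i) (h i)) -> ltstar f h.
Proof.
  intros [j1 H1] H2.
  destruct (classic (olt (proj1_sig j1) (proj1_sig j0))) as [L|L].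
  - exists j0. intros i Hi. exact (olt_trans _ _ _ (H1 i (ole_trans _ _ _ (olt_ole _ _ L) Hi)) (H2 i Hi)).
  - apply not_olt_ole in L. exists j1. intros i Hi.
    exact (olt_trans _ _ _ (H1 i Hi) (H2 i (ole_trans _ _ _ L Hi))).
Qed.

Lemma good_point_transfer (p r : Cond k) (b : O) :
  good_point p b -> (forall g fg, olt g b -> r g = Some fg -> p g = Some fg) -> good_point r b.
Proof.
  intros [A [j [H1 [H2 [H3 H4]]]]] Hpr. exists A, j. repeat (split; [assumption|]).
  intros i Hi g g' fg fg' Ag Ag' L Rg Rg'. apply (H4 i Hi g g' fg fg' Ag Ag' L); apply Hpr; auto.
Qed.

Definition compatible (D : Cond k -> Prop) : Prop :=
  forall p q b f f', D p -> D q -> p b = Some f -> q b = Some f' -> f = f'.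

Lemma directed_compatible (D : Cond k -> Prop) :
  (forall p q, D p -> D q -> exists r, D r /\ ext r p /\ ext r q) -> compatible D.
Proof.
  intros Hdir p q b f f' Dp Dq Hp Hq. destruct (Hdir p q Dp Dq) as [r [_ [Erp Erq]]].
  apply Erp in Hp. apply Erq in Hq. congruence.
Qed.

Definition cond_union (D : Cond k -> Prop) : Cond k :=
  fun b => match excluded_middle_informative (exists p, D p /\ p b <> None) with
           | left H => proj1_sig (constructive_indefinite_description _ H) b
           | right _ => None end.

Lemma cond_union_ext (D : Cond k -> Prop) p b f :
  compatible D -> D p -> p b = Some f -> cond_union D b = Some f.
Proof.
  intros HD Dp Hp. unfold cond_union. destruct (excluded_middle_informative _) as [H|H].
  - destruct (constructive_indefinite_description _ H) as [q [Dq Nq]]; simpl.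
    destruct (q b) as [s|] eqn:E; [|contradiction]. f_equal. exact (HD q p b s f Dq Dp E Hp).
  - exfalso. apply H. exists p. split; [exact Dp|congruence].
Qed.

Lemma cond_union_some (D : Cond k -> Prop) b f :
  cond_union D b = Some f -> exists p, D p /\ p b = Some f.
Proof.
  unfold cond_union. destruct (excluded_middle_informative _) as [H|H]; [|discriminate].
  intros Hb. exists (proj1_sig (constructive_indefinite_description _ H)).
  split; [exact (proj1 (proj2_sig (constructive_indefinite_description _ H)))|exact Hb].
Qed.

Definition cond_put (p : Cond k) (delta : O) (f : seg k -> O) : Cond k :=
  fun b => if excluded_middle_informative (b = delta) then Some f else p b.

End Conditions.

Section Amalgamation.
Context {O : WOrd} {k : O} (lam : seg k -> O) (lp : O) (D : Cond k -> Prop).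
Variables (len : Cond k -> O) (top : Cond k -> seg k -> O) (delta : O) (fd : seg k -> O) (j0 : seg k).
Hypotheses (D_compat : compatible D)
           (D_inG : forall p, D p -> inG_last lam lp p (len p))
           (D_top : forall p, D p -> p (len p) = Some (top p))
           (len_lt : forall p, D p -> olt (len p) delta)
           (len_cofinal : forall b, olt b delta -> exists p, D p /\ ole b (len p))
           (delta_lt : olt delta lp)
           (delta_cof : ~ (exists c, cof_is delta c /\ olt k c))
           (fd_lt : forall i, olt (fd i) (lam i))
           (fd_above : forall i, ole (proj1_sig j0) (proj1_sig i) -> forall p, D p -> olt (top p i) (fd i)).

Let r := cond_put (cond_union D) delta fd.

Lemma dom_len p b : D p -> (p b <> None <-> ole b (len p)).
Proof. intros Dp. apply (D_inG p Dp). Qed.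

Lemma amalgam_ext p : D p -> ext r p.
Proof.
  intros Dp b f Hb. unfold r, cond_put.
  destruct (excluded_middle_informative (b = delta)) as [->|_].
  - exfalso. apply (olt_irrefl delta), (ole_olt_trans _ (len p)); [|exact (len_lt p Dp)].
    apply (dom_len p delta Dp). congruence.
  - exact (cond_union_ext D p b f D_compat Dp Hb).
Qed.

Lemma amalgam_delta : r delta = Some fd.
Proof. unfold r, cond_put. now destruct (excluded_middle_informative (delta = delta)). Qed.

Lemma amalgam_below b f : r b = Some f -> b <> delta -> exists p, D p /\ p b = Some f.
Proof.
  unfold r, cond_put. destruct (excluded_middle_informative (b = delta)); [intros _ C; contradiction|].
  intros Hb _. exact (cond_union_some D b f Hb).
Qed.

Lemma amalgam_dom b : r b <> None <-> ole b delta.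
Proof.
  split.
  - intros Hb. destruct (classic (b = delta)) as [->|Hne]; [apply ole_refl|].
    destruct (r b) as [f|] eqn:E; [|contradiction].
    destruct (amalgam_below b f E Hne) as [p [Dp Hp]].
    left. apply (ole_olt_trans _ (len p)); [apply (dom_len p b Dp); congruence|exact (len_lt p Dp)].
  - intros [Hlt| ->]; [|rewrite amalgam_delta; discriminate].
    destruct (len_cofinal b Hlt) as [p [Dp Hbp]].
    destruct (p b) as [f|] eqn:E; [rewrite (amalgam_ext p Dp b f E); discriminate|].
    exfalso. exact (proj2 (dom_len p b Dp) Hbp E).
Qed.

Lemma amalgam_agrees p b : D p -> ole b (len p) ->
  forall g fg, olt g b -> r g = Some fg -> p g = Some fg.
Proof.
  intros Dp Hb g fg Hg Hr. destruct (p g) as [f|] eqn:E.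
  - now rewrite (amalgam_ext p Dp g f E) in Hr.
  - exfalso. exact (proj2 (dom_len p g Dp) (olt_ole _ _ (olt_ole_trans _ _ _ Hg Hb)) E).
Qed.

Lemma amalgam_entry_below b f : olt b delta -> r b = Some f ->
  (forall i, olt (f i) (lam i)) /\ (forall g f', olt g b -> r g = Some f' -> ltstar f' f) /\
  ((exists c, cof_is b c /\ olt k c) -> good_point r b).
Proof.
  intros Hb Hr.
  assert (Hne : b <> delta) by (intros ->; exact (olt_irrefl _ Hb)).
  destruct (amalgam_below b f Hr Hne) as [p [Dp Hp]].
  destruct (D_inG p Dp) as [_ [Hdom Hentry]].
  destruct (Hentry b f Hp) as [Hbound [Hinc Hgood]].
  assert (Hbp : ole b (len p)) by (apply Hdom; congruence).
  pose proof (amalgam_agrees p b Dp Hbp) as Hagree.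
  split; [exact Hbound|split].
  - intros g f' Hg Hg'. exact (Hinc g f' Hg (Hagree g f' Hg Hg')).
  - intros Hc. exact (good_point_transfer p r b (Hgood Hc) Hagree).
Qed.

Lemma amalgam_entry_delta :
  (forall i, olt (fd i) (lam i)) /\ (forall g f', olt g delta -> r g = Some f' -> ltstar f' fd) /\
  ((exists c, cof_is delta c /\ olt k c) -> good_point r delta).
Proof.
  split; [exact fd_lt|split; [|intros Hc; destruct (delta_cof Hc)]].
  intros g f' Hg Hr.
  assert (Hne : g <> delta) by (intros ->; exact (olt_irrefl _ Hg)).
  destruct (amalgam_below g f' Hr Hne) as [p [Dp Hp]].
  destruct (D_inG p Dp) as [_ [Hdom Hentry]].
  assert (Hgp : ole g (len p)) by (apply Hdom; congruence).
  destruct Hgp as [Hlt| ->].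
  - apply (ltstar_tail_trans f' (top p) fd j0); [|intros i Hi; exact (fd_above i Hi p Dp)].
    exact (proj1 (proj2 (Hentry _ _ (D_top p Dp))) g f' Hlt Hp).
  - rewrite (D_top p Dp) in Hp. injection Hp as <-. exists j0. intros i Hi. exact (fd_above i Hi p Dp).
Qed.

Lemma amalgam_inG : inG_last lam lp r delta.
Proof.
  split; [exact delta_lt|split; [exact amalgam_dom|]].
  intros b f Hb.
  assert (Hdelta : ole b delta) by (apply amalgam_dom; congruence).
  destruct Hdelta as [Hlt| ->].
  - exact (amalgam_entry_below b f Hlt Hb).
  - rewrite amalgam_delta in Hb. injection Hb as <-. exact amalgam_entry_delta.
Qed.

End Amalgamation.

Theorem proposition2p9 (O : WOrd) (lambda kappa lambdap : O) (lam : seg kappa -> O) :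
  singular_cardinal_of_cof lambda kappa ->
  succ_cardinal lambda lambdap ->
  (forall i j : seg kappa, olt (proj1_sig i) (proj1_sig j) -> olt (lam i) (lam j)) ->
  (forall i, regular_cardinal (lam i)) ->
  (forall i, olt (lam i) lambda) ->
  unbounded_in (fun x => exists i, lam i = x) lambda ->
  G_kappa_plus_directed_closed lam lambdap.
Proof.
  intros [_ [lambda_inf [_ kappa_lt]]] Hsucc Hmono Hreg _ Hunb D HD Hdir HDsmall.
  destruct (choice_on lambda D (inG_last lam lambdap) HD) as [len Hlen].
  destruct (choice_on (fun _ => lambda) D (fun p f => p (len p) = Some f)) as [top Htop].
  { intros p Dp. exact (inG_last_top _ _ _ _ (Hlen p Dp)). }
  destruct (sup_below_successor lambda lambdap kappa {p | D p} (fun p => len (proj1_sig p))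
              Hsucc lambda_inf kappa_lt HDsmall) as [delta [delta_lt [len_lt_sig [len_cofinal delta_cof]]]].
  { intros [p Dp]. exact (proj1 (Hlen p Dp)). }
  destruct (tail_above lambda kappa lam kappa_lt Hmono Hreg Hunb) as [j0 Hj0].
  destruct (bounding_function kappa lam j0 {p | D p} (fun p => top (proj1_sig p)) Hreg Hj0 HDsmall)
    as [fd [fd_lt fd_above]].
  { intros [p Dp] i. exact (proj1 (proj2 (proj2 (Hlen p Dp)) _ _ (Htop p Dp)) i). }
  pose proof (directed_compatible D Hdir) as Hcompat.
  assert (len_lt : forall p, D p -> olt (len p) delta) by (intros p Dp; exact (len_lt_sig (exist _ p Dp))).
  exists (cond_put (cond_union D) delta fd). split.
  - exists delta. apply (amalgam_inG lam lambdap D len top delta fd j0); auto.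
    + intros b Hb. destruct (len_cofinal b Hb) as [[p Dp] Hp]. eauto.
    + intros i Hi p Dp. exact (fd_above i Hi (exist _ p Dp)).
  - intros p Dp. exact (amalgam_ext lam lambdap D len delta fd Hcompat Hlen len_lt p Dp).
Qed.
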